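(* For any $m,n\geq 2$, the weight-$1$ summand $\mathcal{W}_1$ of $\check{\pi}_n(\mathbb{E}_m)$ is contained in $\operatorname{im}(\Psi_n)$ and is a direct summand of $\operatorname{im}(\Psi_n)$.
   Context: $\mathbb{E}_m$ is the shrinking wedge of countably many $m$-spheres $S^m_1,S^m_2,\dots$ (one-point union with wedgepoint $b_0$; $U$ open iff $U\cap S^m_j$ open for all $j$ and, if $b_0\in U$, $S^m_j\subseteq U$ for all but finitely many $j$). $X_{\leq k}=\bigvee_{j=1}^kS^m_j$, $b_{k+1,k}$ collapses the $(k+1)$-st sphere, $b_k:\mathbb{E}_m\to X_{\leq k}$ collapses $\bigcup_{j>k}S^m_j$; $\check{\pi}_n(\mathbb{E}_m)=\varprojlim_k(\pi_n(X_{\leq k}),(b_{k+1,k})_\#)$ and $\Psi_n([f])=([b_k\circ f])_k$. Let $a_i\in\pi_m(X_{\leq k})$ be the class of the inclusion of the $i$-th sphere. Fix coherent Hall sets $H_1\subseteq H_2\subseteq\cdots$ on $A_k=\{a_1,\dots,a_k\}$ (standard Hall-set construction: $H_k(1)=A_k$ ordered $a_1<\dots<a_k$; $H_k(p)$ consists of brackets $[x,y]$ with $x\in H_k(i)$, $y\in H_k(j)$, $i+j=p$, $x<y$, and $u\leq x$ if $y=[u,v]$, placed after lower weights; $H_{k+1}\setminus H_k$ are the words involving $a_{k+1}$), $H_\infty=\bigcup_kH_k$, and $H_\infty(j)$ the Hall words of weight (length) $j$. A Hall word $w$ of weight $L(w)$ is an iterated Whitehead product in $\pi_{(m-1)L(w)+1}(X_{\leq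 k})$, and $w\circ f$ denotes composition with $f\in\pi_n(S^{(m-1)L(w)+1})$. The isomorphism $\phi_{n,\infty}:\prod_{w\in H_\infty}\pi_n(S^{(m-1)L(w)+1})\to\check{\pi}_n(\mathbb{E}_m)$ is $(f_w)\mapsto(\sum_{w\in H_k}w\circ f_w)_k$, and the weight-$j$ summand is $\mathcal{W}_j=\phi_{n,\infty}\big(\prod_{w\in H_\infty(j)}\pi_n(S^{(m-1)j+1})\big)$. Thus $\mathcal{W}_1$ consists of the elements $(\sum_{i=1}^k(\iota_i)_\#\alpha_i)_k$ with $\alpha_i\in\pi_n(S^m)$, $\iota_i$ the inclusion of the $i$-th sphere. *)

From HB Require Import structures.
From mathcomp Require Import all_boot all_order all_algebra.
From mathcomp Require Import all_classical all_reals all_analysis.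
Import numFieldNormedType.Exports.
Import Order.TTheory GRing.Theory Num.Theory.

Set Implicit Arguments.
Unset Strict Implicit.
Unset Printing Implicit Defensive.

Local Open Scope classical_set_scope.
Local Open Scope ring_scope.

(* a predicate singling out its open sets.  Domains of maps are subsets of   *)
(* R^N = 'rV[R]_N with the (standard) subspace topology.                     *)

Record space (T : Type) := Space { carrier : set T; isopen : set T -> Prop }.

Section Framework.
Variable R : realType.

(* A is relatively open in D  (only A `&` D matters) *)
Definition relopen (N : nat) (D A : set 'rV[R]_N) : Prop :=
  exists V : set 'rV[R]_N, open V /\ V `&` D = A `&` D.

Definition cont_on (N : nat) (T : Type) (D : set 'rV[R]_N) (X : space T)
    (f : 'rV[R]_N -> T) : Prop :=
  (forall t, D t -> carrier X (f t)) /\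
  (forall U, isopen X U -> relopen D (f @^-1` U)).

Definition cube (N : nat) : set 'rV[R]_N :=
  [set t | forall i, 0 <= t 0 i <= 1].
Definition bdry (N : nat) : set 'rV[R]_N :=
  [set t | cube t /\ exists i, t 0 i = 0 \/ t 0 i = 1].

(* based maps (I^n, dI^n) -> (X, x0): representatives of pi_n(X, x0) *)
Definition based_map (n : nat) (T : Type) (X : space T) (x0 : T)
    (f : 'rV[R]_n -> T) : Prop :=
  cont_on (@cube n) X f /\ (forall t, bdry t -> f t = x0).

(* homotopy rel boundary: equality in pi_n(X, x0) *)
Definition homotopic (n : nat) (T : Type) (X : space T) (x0 : T)
    (f g : 'rV[R]_n -> T) : Prop :=
  exists H : 'rV[R]_(n + 1) -> T,
    cont_on (@cube (n + 1)) X H /\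
    (forall t, cube t ->
       H (row_mx t (const_mx 0)) = f t /\ H (row_mx t (const_mx 1)) = g t) /\
    (forall t s, bdry t -> 0 <= s <= 1 -> H (row_mx t (const_mx s)) = x0).

Definition first_le_half (n : nat) (t : 'rV[R]_n) : bool :=
  [forall i : 'I_n, (val i == 0%N) ==> (t 0 i <= 2^-1)].
Definition reparam (n : nat) (a b : R) (t : 'rV[R]_n) : 'rV[R]_n :=
  \row_i (if val i == 0%N then a * t 0 i + b else t 0 i).
Definition concat (n : nat) (T : Type) (f g : 'rV[R]_n -> T) : 'rV[R]_n -> T :=
  fun t => if first_le_half t then f (reparam 2 0 t) else g (reparam 2 (-1) t).
Definition rev (n : nat) (T : Type) (f : 'rV[R]_n -> T) : 'rV[R]_n -> T :=
  fun t => f (reparam (-1) 1 t).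

Definition sphere (m : nat) : set 'rV[R]_(m.+1) :=
  [set x | \sum_(i < m.+1) x 0 i ^+ 2 = 1].
Arguments sphere : clear implicits.
Definition s0 (m : nat) : 'rV[R]_(m.+1) := \row_i (if i == ord0 then 1 else 0).
Definition Sspace (m : nat) : space 'rV[R]_(m.+1) :=
  Space (sphere m) (relopen (sphere m)).

(* Wedges of m-spheres.  A point is None (the wedge point b0) or Some (j,x) *)
(* with j >= 1 the index of the sphere and x in S^m \ {s0}.                 *)
Definition wpt (m : nat) := option (nat * 'rV[R]_(m.+1)).

Definition inW (m j : nat) (x : 'rV[R]_(m.+1)) : wpt m :=
  if x == s0 m then None else Some (j, x).

Definition in_sphere_j (m : nat) (P : nat -> Prop) (p : wpt m) : Prop :=
  match p with
  | None => True
  | Some (j, x) => P j /\ sphere m x /\ x != s0 m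
  end.

Definition Xle (m k : nat) : space (wpt m) :=
  Space (in_sphere_j (fun j => (0 < j <= k)%N))
        (fun U => forall j, (0 < j <= k)%N ->
                    relopen (sphere m) [set x | U (inW j x)]).

Definition Espace (m : nat) : space (wpt m) :=
  Space (in_sphere_j (fun j => (0 < j)%N))
        (fun U => (forall j, (0 < j)%N -> relopen (sphere m) [set x | U (inW j x)])
               /\ (U None -> exists N, forall j, (N <= j)%N -> (0 < j)%N ->
                                        forall x, sphere m x -> U (inW j x))).

Definition collapse (m k : nat) (p : wpt m) : wpt m :=
  match p with
  | Some (j, x) => if (j <= k)%N then p else None
  | None => None
  end.

(* The Cech group  check-pi_n(E_m) = lim_k pi_n(X_{<=k}), via threads of    *)
(* representatives F k : I^n -> X_{<=k}.                                      *)
Definition thread (m n : nat) := nat -> 'rV[R]_n -> wpt m.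

Definition is_thread (m n : nat) (F : thread m n) : Prop :=
  (forall k, based_map (Xle m k) None (F k)) /\
  (forall k, homotopic (Xle m k) None (collapse k \o F k.+1) (F k)).

(* equality in the inverse limit *)
Definition cech_eq (m n : nat) (F G : thread m n) : Prop :=
  forall k, homotopic (Xle m k) None (F k) (G k).

Definition cech_add (m n : nat) (F G : thread m n) : thread m n :=
  fun k => concat (F k) (G k).
Definition cech_opp (m n : nat) (F : thread m n) : thread m n :=
  fun k => rev (F k).
Definition cech_zero (m n : nat) : thread m n := fun _ _ => None.

(* im(Psi_n):  Psi_n([f]) = ([b_k o f])_k *)
Definition in_imPsi (m n : nat) (F : thread m n) : Prop :=
  is_thread F /\
  exists f : 'rV[R]_n -> wpt m, based_map (Espace m) None f /\
    forall k, homotopic (Xle m k) None (F k) (collapse k \o f).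

Definition wsum (m n : nat) (alpha : nat -> 'rV[R]_n -> 'rV[R]_(m.+1)) (k : nat)
    : 'rV[R]_n -> wpt m :=
  foldr (fun i acc => concat (inW i \o alpha i) acc) (fun _ => None) (iota 1 k).

Definition in_W1 (m n : nat) (F : thread m n) : Prop :=
  is_thread F /\
  exists alpha : nat -> 'rV[R]_n -> 'rV[R]_(m.+1),
    (forall i, (0 < i)%N -> based_map (Sspace m) (s0 m) (alpha i)) /\
    forall k, homotopic (Xle m k) None (F k) (wsum alpha k).

Definition direct_summand_in (m n : nat) (A B : thread m n -> Prop) : Prop :=
  exists C : thread m n -> Prop,
    (forall F G, C F -> is_thread G -> cech_eq F G -> C G) /\
    C (@cech_zero m n) /\
    (forall F G, C F -> C G -> C (cech_add F G)) /\
    (forall F, C F -> C (cech_opp F)) /\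
    (forall F, C F -> B F) /\
    (forall F, B F -> exists W D, A W /\ C D /\ cech_eq F (cech_add W D)) /\
    (forall F, A F -> C F -> cech_eq F (@cech_zero m n)).

End Framework.

(* Weight 1 lies in the image of Psi_n: a weight-1 element is represented
   at level k by the sum alpha_1 + ... + alpha_k of sphere classes, and the
   infinite concatenation alpha_1 . (alpha_2 . (alpha_3 . ...)) is a single
   map into the shrinking wedge. It is continuous because the factors of
   large index fill the tiny intervals near the face t_1 = 1 and land in
   spheres of large index, all of which lie in any neighbourhood of the
   wedge point; its collapses b_k are the finite sums.

   Splitting: let r_i be the retraction of the wedge onto its i-th sphere.
   An element F of im(Psi_n) determines beta_i = r_i o F_i, hence the
   weight-1 element W = (sum_i (iota_i)_# beta_i)_k, and F = W + (-W + F),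
   where every sphere component of -W + F is null. The elements of im(Psi_n)
   all of whose sphere components are null form a subgroup, and one lying
   in W_1 has all alpha_i null, hence is 0. *)

From Pilot Require Import Defs.
From HB Require Import structures.
From mathcomp Require Import all_boot all_order all_algebra.
From mathcomp Require Import all_classical all_reals all_analysis.
From mathcomp Require Import lra zify.
Import numFieldNormedType.Exports.
Import Order.TTheory GRing.Theory Num.Theory.
Set Implicit Arguments.
Unset Strict Implicit.
Unset Printing Implicit Defensive.
Local Open Scope classical_set_scope.
Local Open Scope ring_scope.

Section RelativeContinuity.
Variable R : realType.

Lemma continuous_mx (T : topologicalType) (m n : nat) (g : T -> 'M[R]_(m, n)) :
  (forall i j, continuous (fun x => g x i j)) -> continuous g.
Proof.
move=> hg x A /nbhs_ballP [e e0 eA].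
have : \forall y \near x, forall ij : 'I_m * 'I_n,
    ball (g x ij.1 ij.2) e (g y ij.1 ij.2).
  apply: filter_forall => -[i j] /=.
  by apply: (hg i j x); exact: nbhsx_ballx.
by apply: filterS => y hy; apply: eA; split => // i j; exact: (hy (i, j)).
Qed.

Lemma relopen_locally N (D A : set 'rV[R]_N) :
  (forall x, D x -> A x ->
     exists V, open V /\ V x /\ (forall y, V y -> D y -> A y)) ->
  relopen D A.
Proof.
move=> h.
exists (\bigcup_(W in [set W | open W /\ (forall y, W y -> D y -> A y)]) W).
split; first by apply: bigcup_open => W [].
apply/seteqP; split => y [Hy Dy]; split => //.
  by case: Hy => W [_ hW] Wy; exact: hW.
by have [V [oV [Vy hV]]] := h y Dy Hy; exists V.
Qed.

Lemma relopen_nbhs N (D A : set 'rV[R]_N) x : relopen D A -> D x -> A x ->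
  exists V, open V /\ V x /\ (forall y, V y -> D y -> A y).
Proof.
move=> [V [oV hV]] Dx Ax; exists V; split => //; split.
  by have : (A `&` D) x by []; rewrite -hV => -[].
by move=> y Vy Dy; have : (V `&` D) y by []; rewrite hV => -[].
Qed.

Lemma relopen_const N (D : set 'rV[R]_N) (P : Prop) : relopen D [set _ | P].
Proof.
have [hP|hP] := pselect P.
  by exists setT; split; [exact: openT|apply/seteqP; split => y []].
by exists set0; split; [exact: open0|apply/seteqP; split => y [] //].
Qed.

Lemma relopen_ext N (D A B : set 'rV[R]_N) : (forall y, A y <-> B y) ->
  relopen D A -> relopen D B.
Proof.
move=> e [V [oV hV]]; exists V; split => //; rewrite hV.
by apply/seteqP; split => y [Hy Dy]; split => //; apply/e.
Qed.

Variables (T : Type) (X : Defs.space T).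

Lemma cont_on_comp M N (D' : set 'rV[R]_M) (D : set 'rV[R]_N)
    (g : 'rV[R]_M -> 'rV[R]_N) (f : 'rV[R]_N -> T) :
  continuous g -> (forall t, D' t -> D (g t)) -> cont_on D X f ->
  cont_on D' X (f \o g).
Proof.
move=> cg hD [hc ho]; split => [t /hD /hc //|U /ho [V [oV hV]]].
exists (g @^-1` V); split; first by move/continuousP: cg; apply.
apply/seteqP; split => y [Hy Dy]; split => //.
  have : (V `&` D) (g y) by split => //; apply: hD.
  by rewrite hV => -[].
have : (f @^-1` U `&` D) (g y) by split => //; apply: hD.
by rewrite -hV => -[].
Qed.

Lemma cont_on_eq N (D : set 'rV[R]_N) (f g : 'rV[R]_N -> T) :
  (forall t, D t -> f t = g t) -> cont_on D X f -> cont_on D X g.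
Proof.
move=> e [hc ho]; split => [t Dt|U /ho [V [oV hV]]]; first by rewrite -e //; apply: hc.
exists V; split => //; rewrite hV; apply/seteqP.
by split => y [Hy Dy]; split; rewrite //= ?e // -e.
Qed.

Lemma cont_on_const N (D : set 'rV[R]_N) x0 :
  carrier X x0 -> cont_on D X (fun _ => x0).
Proof. by split => // U _; exact: relopen_const. Qed.

Lemma cont_on_paste N (D K1 K2 : set 'rV[R]_N) (f : 'rV[R]_N -> T) :
  closed K1 -> closed K2 -> (forall t, D t -> K1 t \/ K2 t) ->
  cont_on (D `&` K1) X f -> cont_on (D `&` K2) X f -> cont_on D X f.
Proof.
move=> c1 c2 hK [hc1 ho1] [hc2 ho2]; split.
  by move=> t Dt; case: (hK t Dt) => h; [apply: hc1|apply: hc2].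
move=> U oU; apply: relopen_locally => x Dx Ux.
have piece K : closed K -> (forall x, (D `&` K) x -> U (f x) ->
      exists V, open V /\ V x /\ (forall y, V y -> (D `&` K) y -> U (f y))) ->
    exists W, open W /\ W x /\ (forall y, W y -> D y -> K y -> U (f y)).
  move=> cK ho; have [xK|xK] := pselect (K x).
    have [V [oV [Vx hV]]] := ho x (conj Dx xK) Ux.
    by exists V; split => //; split => // y Vy Dy Ky; apply: hV.
  exists (~` K); split; first exact: closed_openC.
  by split => // y.
have [W1 [oW1 [W1x hW1]]] := piece K1 c1 (fun y => relopen_nbhs (x := y) (ho1 U oU)).
have [W2 [oW2 [W2x hW2]]] := piece K2 c2 (fun y => relopen_nbhs (x := y) (ho2 U oU)).
exists (W1 `&` W2); split; first exact: openI.
split => // y [y1 y2] Dy.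
by case: (hK y Dy) => h; [apply: hW1|apply: hW2].
Qed.

Lemma cont_on_if_half N (D : set 'rV[R]_N) (P : 'rV[R]_N -> R)
    (A B : 'rV[R]_N -> T) :
  continuous P ->
  cont_on (D `&` [set v | P v <= 2^-1]) X A ->
  cont_on (D `&` [set v | 2^-1 <= P v]) X B ->
  (forall v, D v -> P v = 2^-1 -> A v = B v) ->
  cont_on D X (fun v => if P v <= 2^-1 then A v else B v).
Proof.
move=> cP hA hB hAB.
apply: (@cont_on_paste _ D (P @^-1` [set x | x <= 2^-1])
                           (P @^-1` [set x | 2^-1 <= x])).
- by apply: preimage_closed => //; exact: closed_le.
- by apply: preimage_closed => //; exact: closed_ge.
- by move=> t _; case: (lerP (P t) 2^-1) => h; [left|right; apply: ltW].
- by apply: cont_on_eq hA => t [Dt /= ->].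
- apply: cont_on_eq hB => t [Dt /= ht]; case: ifP => // h.
  by symmetry; apply: hAB => //; apply/eqP; rewrite eq_le h ht.
Qed.

End RelativeContinuity.

Definition space_map T T' (X : Defs.space T) (Y : Defs.space T') (phi : T -> T') :=
  (forall x, carrier X x -> carrier Y (phi x)) /\
  (forall U, isopen Y U -> isopen X (phi @^-1` U)).

Lemma space_map_comp T1 T2 T3 (X : Defs.space T1) (Y : Defs.space T2)
    (Z : Defs.space T3) phi psi :
  space_map X Y phi -> space_map Y Z psi -> space_map X Z (psi \o phi).
Proof. by move=> [a b] [c d]; split => [x /a /c //|U /d /b //]. Qed.

Lemma cont_on_space_map (R : realType) N (D : set 'rV[R]_N) T T'
    (X : Defs.space T) (Y : Defs.space T') phi f :
  space_map X Y phi -> cont_on D X f -> cont_on D Y (phi \o f).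
Proof. by move=> [h1 h2] [c1 c2]; split => [t /c1 /h1 //|U /h2 /c2 //]. Qed.

Section RealContinuity.
Variables (R : realType) (T : topologicalType).
Implicit Types f g : T -> R.

Lemma continuous_coord m n (G : T -> 'M[R]_(m, n)) i j :
  continuous G -> continuous (fun v => G v i j).
Proof. by move=> cG x; apply: continuous_comp (cG x) (@coord_continuous R m n i j (G x)). Qed.

Lemma continuous_addR f g :
  continuous f -> continuous g -> continuous (fun x => f x + g x).
Proof. by move=> cf cg x; exact: (@continuousD R R^o T f g x (cf x) (cg x)). Qed.

Lemma continuous_mulR f g :
  continuous f -> continuous g -> continuous (fun x => f x * g x).
Proof. by move=> cf cg x; exact: (continuousM (cf x) (cg x)). Qed.

Lemma continuous_oppR f : continuous f -> continuous (fun x => - f x).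
Proof. by move=> cf x; exact: (@continuousN R R^o T f x (cf x)). Qed.

Lemma continuous_cstR (c : R) : continuous (fun _ : T => c).
Proof. by move=> x; apply: cst_continuous. Qed.

Lemma continuous_minR f g :
  continuous f -> continuous g -> continuous (fun x => Num.min (f x) (g x)).
Proof. by move=> cf cg x; exact: (@continuous_min R T f g x (cf x) (cg x)). Qed.

Lemma continuous_maxR f g :
  continuous f -> continuous g -> continuous (fun x => Num.max (f x) (g x)).
Proof. by move=> cf cg x; exact: (@continuous_max R T f g x (cf x) (cg x)). Qed.

Lemma continuous_row_mx m n1 n2 (A : T -> 'M[R]_(m, n1)) (B : T -> 'M[R]_(m, n2)) :
  continuous A -> continuous B -> continuous (fun x => row_mx (A x) (B x)).
Proof.
move=> cA cB; apply: continuous_mx => i j.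
under eq_fun => v do rewrite mxE.
by case: (fintype.split j) => k; apply: continuous_coord.
Qed.

Lemma continuous_const_mx m n (S : T -> R) :
  continuous S -> continuous (fun x => (const_mx (S x) : 'M[R]_(m, n))).
Proof. by move=> cS; apply: continuous_mx => i j; under eq_fun => v do rewrite mxE. Qed.

End RealContinuity.

Lemma continuous_idfun (T : topologicalType) : continuous (fun x : T => x).
Proof. by move=> x; apply: cvg_id. Qed.

Notation cyl t s := (row_mx t (const_mx s : 'rV_1)).

Section Cube.
Variables (R : realType) (n : nat).

Definition with_first (u : R) (t : 'rV[R]_n.+1) : 'rV[R]_n.+1 :=
  \row_i (if i == ord0 then u else t 0 i).
Definition cyl_time (v : 'rV[R]_(n.+1 + 1)) : R := v 0 (rshift n.+1 ord0).
Definition cyl_first (v : 'rV[R]_(n.+1 + 1)) : R := lsubmx v 0 ord0.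

Implicit Types (u s : R) (t : 'rV[R]_n.+1) (v : 'rV[R]_(n.+1 + 1)).

Lemma with_first0 u t : with_first u t 0 ord0 = u.
Proof. by rewrite mxE eqxx. Qed.

Lemma with_firstE u t i : i != ord0 -> with_first u t 0 i = t 0 i.
Proof. by rewrite mxE => /negbTE ->. Qed.

Lemma with_first_id t : with_first (t 0 ord0) t = t.
Proof. by apply/rowP => i; rewrite mxE; case: eqP => // ->. Qed.

Lemma with_firstK u u' t : with_first u (with_first u' t) = with_first u t.
Proof. by apply/rowP => i; rewrite !mxE; case: eqP. Qed.

Lemma reparamE a b t : reparam a b t = with_first (a * t 0 ord0 + b) t.
Proof. by apply/rowP => i; rewrite !mxE -[val i == 0%N]/(i == ord0); case: eqP => // ->. Qed.

Lemma first_le_halfE t : first_le_half t = (t 0 ord0 <= 2^-1).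
Proof.
apply/forallP/idP => [h|h i]; first by have /implyP := h ord0; apply.
by apply/implyP => hi; have -> : i = ord0 by apply/val_inj/eqP.
Qed.

Lemma concatE T (f g : 'rV[R]_n.+1 -> T) t :
  concat f g t = if t 0 ord0 <= 2^-1 then f (with_first (2 * t 0 ord0) t)
                 else g (with_first (2 * t 0 ord0 - 1) t).
Proof. by rewrite /concat first_le_halfE !reparamE addr0. Qed.

Lemma revE T (f : 'rV[R]_n.+1 -> T) t : Defs.rev f t = f (with_first (1 - t 0 ord0) t).
Proof. by rewrite /Defs.rev reparamE mulN1r addrC. Qed.

Lemma rev_rev T (f : 'rV[R]_n.+1 -> T) : Defs.rev (Defs.rev f) = f.
Proof.
by apply: funext => t; rewrite !revE with_first0 with_firstK opprB addrC subrK with_first_id.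
Qed.

Lemma comp_concat T T' (phi : T -> T') (f g : 'rV[R]_n.+1 -> T) :
  phi \o concat f g = concat (phi \o f) (phi \o g).
Proof. by apply: funext => t /=; rewrite /concat; case: ifP. Qed.

Lemma comp_rev T T' (phi : T -> T') (f : 'rV[R]_n.+1 -> T) :
  phi \o Defs.rev f = Defs.rev (phi \o f).
Proof. by []. Qed.

Lemma concat_const T (x0 : T) :
  concat (fun _ : 'rV[R]_n.+1 => x0) (fun _ => x0) = (fun _ => x0).
Proof. by apply: funext => t; rewrite /concat; case: ifP. Qed.

Lemma cube_first t : cube t -> 0 <= t 0 ord0 <= 1.
Proof. by apply. Qed.

Lemma bdry_cube t : bdry t -> cube t.
Proof. by case. Qed.

Lemma cube_with_first t u : cube t -> 0 <= u <= 1 -> cube (with_first u t).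
Proof. by move=> ht hu i; rewrite mxE; case: eqP => _ //; exact: ht. Qed.

Lemma bdry_with_first01 t u : cube t -> u = 0 \/ u = 1 -> bdry (with_first u t).
Proof.
move=> ht hu; split; last by exists ord0; rewrite with_first0.
by apply: cube_with_first => //; case: hu => ->; rewrite ?lexx ?ler01.
Qed.

Lemma bdry_with_first t u : bdry t -> 0 <= u <= 1 ->
  ((t 0 ord0 = 0 \/ t 0 ord0 = 1) -> u = 0 \/ u = 1) -> bdry (with_first u t).
Proof.
move=> [ht [i hi]] hu h; split; first exact: cube_with_first.
have [ei|ne] := eqVneq i ord0.
  by exists ord0; rewrite with_first0; apply: h; rewrite -ei.
by exists i; rewrite with_firstE.
Qed.

Lemma cube_left_half t : cube t -> t 0 ord0 <= 2^-1 ->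
  cube (with_first (2 * t 0 ord0) t).
Proof.
move=> ht h; apply: cube_with_first => //; have /andP[h1 h2] := ht ord0.
by apply/andP; split; lra.
Qed.

Lemma cube_right_half t : cube t -> 2^-1 <= t 0 ord0 ->
  cube (with_first (2 * t 0 ord0 - 1) t).
Proof.
move=> ht h; apply: cube_with_first => //; have /andP[h1 h2] := ht ord0.
by apply/andP; split; lra.
Qed.

Lemma cube_flip t : cube t -> cube (with_first (1 - t 0 ord0) t).
Proof.
move=> ht; apply: cube_with_first => //; have /andP[h1 h2] := ht ord0.
by apply/andP; split; lra.
Qed.

Lemma bdry_left_half t : bdry t -> t 0 ord0 <= 2^-1 ->
  bdry (with_first (2 * t 0 ord0) t).
Proof.
move=> ht h; apply: bdry_with_first => //; have /andP[h1 h2] := bdry_cube ht ord0.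
  by apply/andP; split; lra.
by case=> e; rewrite e in h *; [left; rewrite mulr0|lra].
Qed.

Lemma bdry_right_half t : bdry t -> ~~ (t 0 ord0 <= 2^-1) ->
  bdry (with_first (2 * t 0 ord0 - 1) t).
Proof.
rewrite -ltNge => ht h; apply: bdry_with_first => //.
  by have /andP[h1 h2] := bdry_cube ht ord0; apply/andP; split; lra.
by case=> e; rewrite e in h *; [lra|right; lra].
Qed.

Lemma bdry_flip t : bdry t -> bdry (with_first (1 - t 0 ord0) t).
Proof.
move=> ht; apply: bdry_with_first => //; have /andP[h1 h2] := bdry_cube ht ord0.
  by apply/andP; split; lra.
by case=> ->; [right; lra|left; lra].
Qed.

Lemma cyl_baseK t s : lsubmx (cyl t s) = t.
Proof. exact: row_mxKl. Qed.

Lemma cyl_timeK t s : cyl_time (cyl t s) = s.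
Proof. by rewrite /cyl_time row_mxEr mxE. Qed.

Lemma cube_cyl t s : cube t -> 0 <= s <= 1 -> cube (cyl t s).
Proof.
move=> ht hs i; rewrite mxE; case: (fintype.split i) => k; first exact: ht.
by rewrite mxE.
Qed.

Lemma cube_cyl_base v : cube v -> cube (lsubmx v).
Proof. by move=> hv i; rewrite mxE; apply: hv. Qed.

Lemma cube_cyl_time v : cube v -> 0 <= cyl_time v <= 1.
Proof. by apply. Qed.

Lemma continuous_with_first (T : topologicalType) (U : T -> R) (G : T -> 'rV[R]_n.+1) :
  continuous U -> continuous G -> continuous (fun x => with_first (U x) (G x)).
Proof.
move=> cU cG; apply: continuous_mx => i j; under eq_fun => v do rewrite mxE.
by case: eqP => _; [|apply: continuous_coord].
Qed.

Lemma continuous_cyl (T : topologicalType) (G : T -> 'rV[R]_n.+1) (S : T -> R) :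
  continuous G -> continuous S -> continuous (fun x => cyl (G x) (S x)).
Proof. by move=> cG cS; apply: continuous_row_mx => //; apply: continuous_const_mx. Qed.

Lemma continuous_cyl_time : continuous cyl_time.
Proof. exact: coord_continuous. Qed.

Lemma continuous_cyl_base : continuous (lsubmx : 'rV[R]_(n.+1 + 1) -> 'rV[R]_n.+1).
Proof. exact: continuous_lsubmx. Qed.

Lemma continuous_cyl_first : continuous cyl_first.
Proof. exact: continuous_coord continuous_cyl_base. Qed.

Lemma continuous_first : continuous (fun t : 'rV[R]_n.+1 => t 0 ord0).
Proof. exact: coord_continuous. Qed.

End Cube.

Section Homotopy.
Variables (R : realType) (n : nat) (T : Type) (X : Defs.space T) (x0 : T).
Implicit Types (f g h : 'rV[R]_n.+1 -> T) (t : 'rV[R]_n.+1) (s : R).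

Lemma time01 : (0 <= (0 : R) <= 1) * (0 <= (1 : R) <= 1).
Proof. by split; rewrite lexx ler01. Qed.

Lemma based_map_const : carrier X x0 -> based_map X x0 (fun _ : 'rV[R]_n.+1 => x0).
Proof. by move=> hx; split => //; exact: cont_on_const. Qed.

Lemma homotopic_based f g : homotopic X x0 f g -> based_map X x0 f.
Proof.
case=> H [cH [he hb]]; split.
  apply: (@cont_on_eq _ _ _ _ _ (H \o (fun t => cyl t 0))).
    by move=> t ht /=; rewrite (he t ht).1.
  apply: cont_on_comp cH.
    by apply: continuous_cyl; [exact: continuous_idfun|exact: continuous_cstR].
  by move=> t ht; apply: cube_cyl => //; exact: time01.1.
move=> t ht; rewrite -(he t (bdry_cube ht)).1; exact: hb ht time01.1.
Qed.

Lemma homotopic_refl f : based_map X x0 f -> homotopic X x0 f f.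
Proof.
case=> cf bf; exists (f \o lsubmx); split.
  exact: cont_on_comp (@continuous_cyl_base R n) (@cube_cyl_base R n) cf.
split; first by move=> t _ /=; rewrite !cyl_baseK.
by move=> t s ht _ /=; rewrite cyl_baseK; apply: bf.
Qed.

Lemma homotopic_sym f g : homotopic X x0 f g -> homotopic X x0 g f.
Proof.
case=> H [cH [he hb]].
exists (H \o (fun v => cyl (lsubmx v) (1 - cyl_time v))); split.
  apply: cont_on_comp cH.
    apply: continuous_cyl; first exact: continuous_cyl_base.
    apply: continuous_addR; first exact: continuous_cstR.
    by apply: continuous_oppR; exact: continuous_cyl_time.
  move=> v hv; apply: cube_cyl; first exact: cube_cyl_base.
  by have /andP[h1 h2] := cube_cyl_time hv; apply/andP; split; lra.
split=> [t ht|t s ht /andP[s0 s1]] /=; rewrite !cyl_baseK !cyl_timeK.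
  by rewrite subr0 subrr (he t ht).2 (he t ht).1.
by apply: hb => //; apply/andP; split; lra.
Qed.

Lemma homotopic_eq f g f' g' :
  (forall t, cube t -> f t = f' t) -> (forall t, cube t -> g t = g' t) ->
  homotopic X x0 f g -> homotopic X x0 f' g'.
Proof.
move=> ef eg [H [cH [he hb]]]; exists H; split => //; split => // t ht.
by rewrite -ef // -eg //; apply: he.
Qed.

Lemma homotopic_trans f g h :
  homotopic X x0 f g -> homotopic X x0 g h -> homotopic X x0 f h.
Proof.
case=> H1 [c1 [e1 b1]] [H2 [c2 [e2 b2]]].
exists (fun v => if cyl_time v <= 2^-1 then H1 (cyl (lsubmx v) (2 * cyl_time v))
                 else H2 (cyl (lsubmx v) (2 * cyl_time v - 1))); split.
  apply: cont_on_if_half; first exact: continuous_cyl_time.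
  - apply: (@cont_on_comp _ _ _ _ _ _ _ (fun v => cyl (lsubmx v) (2 * cyl_time v))) c1.
      apply: continuous_cyl; first exact: continuous_cyl_base.
      by apply: continuous_mulR; [exact: continuous_cstR|exact: continuous_cyl_time].
    move=> v [hv /= hh]; apply: cube_cyl; first exact: cube_cyl_base.
    by have /andP[h1 h2] := cube_cyl_time hv; apply/andP; split; lra.
  - apply: (@cont_on_comp _ _ _ _ _ _ _ (fun v => cyl (lsubmx v) (2 * cyl_time v - 1))) c2.
      apply: continuous_cyl; first exact: continuous_cyl_base.
      apply: continuous_addR; last exact: continuous_cstR.
      by apply: continuous_mulR; [exact: continuous_cstR|exact: continuous_cyl_time].
    move=> v [hv /= hh]; apply: cube_cyl; first exact: cube_cyl_base.
    by have /andP[h1 h2] := cube_cyl_time hv; apply/andP; split; lra.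
  - move=> v hv ->; have -> : 2 * 2^-1 = 1 :> R by lra.
    by rewrite subrr (e1 _ (cube_cyl_base hv)).2 (e2 _ (cube_cyl_base hv)).1.
split=> [t ht|t s ht /andP[s0 s1]]; rewrite !cyl_timeK !cyl_baseK.
  have -> : (0 : R) <= 2^-1 by lra.
  have -> : ((1 : R) <= 2^-1) = false by apply/negbTE; rewrite -ltNge; lra.
  have -> : (2 : R) * 1 - 1 = 1 by lra.
  by rewrite mulr0 (e1 t ht).1 (e2 t ht).2.
case: ifPn => hs; first by apply: b1 => //; apply/andP; split; lra.
by apply: b2 => //; move: hs; rewrite -ltNge => hs; apply/andP; split; lra.
Qed.

Lemma based_map_concat f g : based_map X x0 f -> based_map X x0 g ->
  based_map X x0 (concat f g).
Proof.
move=> [cf bf] [cg bg]; split.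
  apply: (@cont_on_eq _ _ _ _ _ (fun t => if t 0 ord0 <= 2^-1
      then f (with_first (2 * t 0 ord0) t) else g (with_first (2 * t 0 ord0 - 1) t))).
    by move=> t _; rewrite concatE.
  apply: cont_on_if_half; first exact: continuous_first.
  - apply: (@cont_on_comp _ _ _ _ _ _ _ (fun t => with_first (2 * t 0 ord0) t)) cf.
      apply: continuous_with_first; last exact: continuous_idfun.
      by apply: continuous_mulR; [exact: continuous_cstR|exact: continuous_first].
    by move=> t [ht /= h]; apply: cube_left_half.
  - apply: (@cont_on_comp _ _ _ _ _ _ _ (fun t => with_first (2 * t 0 ord0 - 1) t)) cg.
      apply: continuous_with_first; last exact: continuous_idfun.
      apply: continuous_addR; last exact: continuous_cstR.
      by apply: continuous_mulR; [exact: continuous_cstR|exact: continuous_first].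
    by move=> t [ht /= h]; apply: cube_right_half.
  - move=> t ht ->; have -> : 2 * 2^-1 = 1 :> R by lra.
    by rewrite subrr bf ?bg //; apply: bdry_with_first01 => //; [left|right].
move=> t ht; rewrite concatE; case: ifPn => h.
  by apply: bf; apply: bdry_left_half.
by apply: bg; apply: bdry_right_half.
Qed.

Lemma based_map_rev f : based_map X x0 f -> based_map X x0 (Defs.rev f).
Proof.
move=> [cf bf]; split.
  apply: (@cont_on_eq _ _ _ _ _ (fun t => f (with_first (1 - t 0 ord0) t))).
    by move=> t _; rewrite revE.
  apply: (@cont_on_comp _ _ _ _ _ _ _ (fun t => with_first (1 - t 0 ord0) t)) cf.
    apply: continuous_with_first; last exact: continuous_idfun.
    apply: continuous_addR; first exact: continuous_cstR.
    by apply: continuous_oppR; exact: continuous_first.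
  by move=> t ht; apply: cube_flip.
by move=> t ht; rewrite revE; apply: bf; apply: bdry_flip.
Qed.

Lemma homotopic_concat f g f' g' : homotopic X x0 f f' -> homotopic X x0 g g' ->
  homotopic X x0 (concat f g) (concat f' g').
Proof.
case=> H1 [c1 [e1 b1]] [H2 [c2 [e2 b2]]].
exists (fun v => if cyl_first v <= 2^-1
   then H1 (cyl (with_first (2 * cyl_first v) (lsubmx v)) (cyl_time v))
   else H2 (cyl (with_first (2 * cyl_first v - 1) (lsubmx v)) (cyl_time v))); split.
  apply: cont_on_if_half; first exact: continuous_cyl_first.
  - apply: (@cont_on_comp _ _ _ _ _ _ _
      (fun v => cyl (with_first (2 * cyl_first v) (lsubmx v)) (cyl_time v))) c1.
      apply: continuous_cyl; last exact: continuous_cyl_time.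
      apply: continuous_with_first; last exact: continuous_cyl_base.
      by apply: continuous_mulR; [exact: continuous_cstR|exact: continuous_cyl_first].
    move=> v [hv /= hh]; apply: cube_cyl; last exact: cube_cyl_time.
    by apply: cube_left_half => //; apply: cube_cyl_base.
  - apply: (@cont_on_comp _ _ _ _ _ _ _
      (fun v => cyl (with_first (2 * cyl_first v - 1) (lsubmx v)) (cyl_time v))) c2.
      apply: continuous_cyl; last exact: continuous_cyl_time.
      apply: continuous_with_first; last exact: continuous_cyl_base.
      apply: continuous_addR; last exact: continuous_cstR.
      by apply: continuous_mulR; [exact: continuous_cstR|exact: continuous_cyl_first].
    move=> v [hv /= hh]; apply: cube_cyl; last exact: cube_cyl_time.
    by apply: cube_right_half => //; apply: cube_cyl_base.
  - move=> v hv ->; have -> : 2 * 2^-1 = 1 :> R by lra.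
    have hv' := cube_cyl_base hv.
    rewrite subrr b1 ?b2 //; try exact: cube_cyl_time.
      by apply: bdry_with_first01 => //; left.
    by apply: bdry_with_first01 => //; right.
rewrite /cyl_first; split=> [t ht|t s ht hs]; rewrite ?concatE !cyl_baseK ?cyl_timeK.
  case: ifPn => h.
    by rewrite (e1 _ (cube_left_half ht h)).1 (e1 _ (cube_left_half ht h)).2.
  have h' : 2^-1 <= t 0 ord0 by rewrite ltW // ltNge.
  by rewrite (e2 _ (cube_right_half ht h')).1 (e2 _ (cube_right_half ht h')).2.
case: ifPn => h; first by apply: b1 => //; apply: bdry_left_half.
by apply: b2 => //; apply: bdry_right_half.
Qed.

Lemma homotopic_rev f g : homotopic X x0 f g ->
  homotopic X x0 (Defs.rev f) (Defs.rev g).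
Proof.
case=> H1 [c1 [e1 b1]].
exists (fun v => H1 (cyl (with_first (1 - cyl_first v) (lsubmx v)) (cyl_time v))); split.
  apply: (@cont_on_comp _ _ _ _ _ _ _
    (fun v => cyl (with_first (1 - cyl_first v) (lsubmx v)) (cyl_time v))) c1.
    apply: continuous_cyl; last exact: continuous_cyl_time.
    apply: continuous_with_first; last exact: continuous_cyl_base.
    apply: continuous_addR; first exact: continuous_cstR.
    by apply: continuous_oppR; exact: continuous_cyl_first.
  move=> v hv; apply: cube_cyl; last exact: cube_cyl_time.
  by apply: cube_flip; apply: cube_cyl_base.
rewrite /cyl_first; split=> [t ht|t s ht hs]; rewrite ?revE !cyl_baseK !cyl_timeK.
  by rewrite (e1 _ (cube_flip ht)).1 (e1 _ (cube_flip ht)).2.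
by apply: b1 => //; apply: bdry_flip.
Qed.

(* Every relation between iterated concatenations below is witnessed by
   reparametrising the first coordinate through [phi u s], a map
   I x I -> I fixing the faces {0, 1} for every time [s]. *)
Lemma homotopic_reparam (phi : R -> R -> R) f F G :
  continuous (fun v : 'rV[R]_(n.+1 + 1) => phi (cyl_first v) (cyl_time v)) ->
  (forall u s, 0 <= u <= 1 -> 0 <= s <= 1 -> 0 <= phi u s <= 1) ->
  (forall s, 0 <= s <= 1 ->
     (phi 0 s = 0 \/ phi 0 s = 1) /\ (phi 1 s = 0 \/ phi 1 s = 1)) ->
  based_map X x0 f ->
  (forall t, cube t -> f (with_first (phi (t 0 ord0) 0) t) = F t) ->
  (forall t, cube t -> f (with_first (phi (t 0 ord0) 1) t) = G t) ->
  homotopic X x0 F G.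
Proof.
move=> cphi hrange hends [cf bf] eF eG; apply: homotopic_eq eF eG _.
exists (fun v => f (with_first (phi (cyl_first v) (cyl_time v)) (lsubmx v))); split.
  apply: (@cont_on_comp _ _ _ _ _ _ _
    (fun v => with_first (phi (cyl_first v) (cyl_time v)) (lsubmx v))) cf.
    by apply: continuous_with_first => //; exact: continuous_cyl_base.
  move=> v hv; apply: cube_with_first; first exact: cube_cyl_base.
  by apply: hrange; [apply: (cube_cyl_base hv)|apply: cube_cyl_time].
rewrite /cyl_first; split=> [t ht|t s ht hs]; rewrite !cyl_baseK ?cyl_timeK //.
apply: bf; apply: bdry_with_first => //.
  by apply: hrange => //; apply: (bdry_cube ht).
by case=> ->; have [] := hends s hs.
Qed.

End Homotopy.

Section SpaceMaps.
Variables (R : realType) (n : nat) (T T' : Type).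
Variables (X : Defs.space T) (Y : Defs.space T') (x0 : T) (y0 : T').
Variable phi : T -> T'.
Hypotheses (phiC : space_map X Y phi) (phi_x0 : phi x0 = y0).

Lemma based_map_comp (f : 'rV[R]_n.+1 -> T) :
  based_map X x0 f -> based_map Y y0 (phi \o f).
Proof.
move=> [cf bf]; split; first exact: cont_on_space_map cf.
by move=> t ht /=; rewrite bf.
Qed.

Lemma homotopic_comp (f g : 'rV[R]_n.+1 -> T) :
  homotopic X x0 f g -> homotopic Y y0 (phi \o f) (phi \o g).
Proof.
move=> [H [cH [he hb]]]; exists (phi \o H); split; first exact: cont_on_space_map cH.
split; first by move=> t ht /=; rewrite !(he t ht).1 !(he t ht).2.
by move=> t s ht hs /=; rewrite hb.
Qed.

End SpaceMaps.

Section GroupLaws.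
Variables (R : realType) (n : nat) (T : Type) (X : Defs.space T) (x0 : T).
Implicit Types (f g h : 'rV[R]_n.+1 -> T) (t : 'rV[R]_n.+1).

Lemma minR (a b : R) :
  (a <= b /\ Num.min a b = a) \/ (b <= a /\ Num.min a b = b).
Proof. by rewrite /Order.min; case: (ltrP a b) => h; [left|right]; split => //; exact: ltW. Qed.

Lemma maxR (a b : R) :
  (a <= b /\ Num.max a b = b) \/ (b <= a /\ Num.max a b = a).
Proof. by rewrite /Order.max; case: (ltrP a b) => h; [left|right]; split => //; exact: ltW. Qed.

Ltac continuity := repeat first
  [ apply: continuous_addR | apply: continuous_mulR | apply: continuous_oppR
  | apply: continuous_maxR | apply: continuous_minR | exact: continuous_cstR
  | exact: (@continuous_cyl_first R n) | exact: (@continuous_cyl_time R n) ].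

Lemma homotopic_concat_constl f : based_map X x0 f ->
  homotopic X x0 (concat (fun _ => x0) f) f.
Proof.
move=> bf; apply: (@homotopic_reparam _ _ _ _ _
  (fun u s => (1 - s) * Num.max 0 (2 * u - 1) + s * u) f) => //.
- by continuity.
- move=> u s /andP[u0 u1] /andP[s0 s1].
  by case: (maxR 0 (2 * u - 1)) => -[hm ->]; apply/andP; split; nra.
- move=> s hs; rewrite !mulr0 !mulr1 addr0 !add0r.
  case: (maxR 0 (-1)) => -[hm ->]; case: (maxR 0 (2 - 1)) => -[hm2 ->];
    (split; [left|right]); lra.
- move=> t ht /=; rewrite concatE subr0 mul1r mul0r addr0.
  have /andP[t0 t1] := cube_first ht; have [_ bf0] := bf.
  case: ifPn => hh; last first.
    by rewrite -ltNge in hh; case: (maxR 0 (2 * t 0 ord0 - 1)) => -[hm ->] //; exfalso; lra.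
  case: (maxR 0 (2 * t 0 ord0 - 1)) => -[hm ->].
    have -> : 2 * t 0 ord0 - 1 = 0 by lra.
    by apply: bf0; apply: bdry_with_first01 => //; left.
  by apply: bf0; apply: bdry_with_first01 => //; left.
- by move=> t ht /=; rewrite subrr mul0r add0r mul1r with_first_id.
Qed.

Lemma homotopic_concat_constr f : based_map X x0 f ->
  homotopic X x0 (concat f (fun _ => x0)) f.
Proof.
move=> bf; apply: (@homotopic_reparam _ _ _ _ _
  (fun u s => (1 - s) * Num.min 1 (2 * u) + s * u) f) => //.
- by continuity.
- move=> u s /andP[u0 u1] /andP[s0 s1].
  by case: (minR 1 (2 * u)) => -[hm ->]; apply/andP; split; nra.
- move=> s hs; rewrite !mulr0 !mulr1 addr0.
  case: (minR 1 0) => -[hm ->]; case: (minR 1 2) => -[hm2 ->];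
    (split; [left|right]); lra.
- move=> t ht /=; rewrite concatE subr0 mul1r mul0r addr0.
  have /andP[t0 t1] := cube_first ht; have [_ bf0] := bf.
  case: ifPn => hh; case: (minR 1 (2 * t 0 ord0)) => -[hm ->].
  + by have -> : 2 * t 0 ord0 = 1 by lra.
  + by [].
  + by apply: bf0; apply: bdry_with_first01 => //; right.
  + by rewrite -ltNge in hh; exfalso; lra.
- by move=> t ht /=; rewrite subrr mul0r add0r mul1r with_first_id.
Qed.

Lemma homotopic_concat_revr f : based_map X x0 f ->
  homotopic X x0 (concat f (Defs.rev f)) (fun _ => x0).
Proof.
move=> bf; apply: (@homotopic_reparam _ _ _ _ _
  (fun u s => (1 - s) * Num.min (2 * u) (2 - 2 * u)) f) => //.
- by continuity.
- move=> u s /andP[u0 u1] /andP[s0 s1].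
  by case: (minR (2 * u) (2 - 2 * u)) => -[hm ->]; apply/andP; split; nra.
- move=> s hs; rewrite !mulr0 !mulr1 subr0 subrr.
  case: (minR 0 2) => -[hm ->]; case: (minR 2 0) => -[hm2 ->];
    (split; left); lra.
- move=> t ht /=; rewrite concatE subr0 mul1r revE with_first0 with_firstK.
  have /andP[t0 t1] := cube_first ht.
  case: ifPn => hh; case: (minR (2 * t 0 ord0) (2 - 2 * t 0 ord0)) => -[hm ->];
    try (by exfalso; lra); by congr f; congr with_first; lra.
- move=> t ht /=; rewrite subrr mul0r; have [_ ->] // := bf.
  by apply: bdry_with_first01 => //; left.
Qed.

Lemma homotopic_concat_revl f : based_map X x0 f ->
  homotopic X x0 (concat (Defs.rev f) f) (fun _ => x0).
Proof. by move=> bf; have := homotopic_concat_revr (based_map_rev bf); rewrite rev_rev. Qed.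

(* The piecewise linear map sending [0, 1/4], [1/4, 1/2], [1/2, 1] onto
   [0, 1/2], [1/2, 3/4], [3/4, 1]: it carries f.(g.h) to (f.g).h. *)
Definition reassoc (u : R) := Num.min (2 * u) (Num.min (u + 4^-1) (2^-1 * u + 2^-1)).

Lemma min3E (a b c m : R) : m = a \/ m = b \/ m = c ->
  m <= a -> m <= b -> m <= c -> Num.min a (Num.min b c) = m.
Proof.
move=> hm ha hb hc; case: (minR b c) => -[h1 ->].
  by case: (minR a b) => -[h2 ->]; lra.
by case: (minR a c) => -[h2 ->]; lra.
Qed.

Lemma reassoc_quarter u : 0 <= u <= 4^-1 -> reassoc u = 2 * u.
Proof. by move=> /andP[h1 h2]; apply: min3E; lra. Qed.

Lemma reassoc_half u : 4^-1 <= u <= 2^-1 -> reassoc u = u + 4^-1.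
Proof. by move=> /andP[h1 h2]; apply: min3E; lra. Qed.

Lemma reassoc_last u : 2^-1 <= u -> reassoc u = 2^-1 * u + 2^-1.
Proof. by move=> h; apply: min3E; lra. Qed.

Lemma reassoc_itv u : 0 <= u <= 1 -> 0 <= reassoc u <= 1.
Proof.
move=> /andP[h1 h2]; case: (lerP u 4^-1) => a.
  by rewrite reassoc_quarter; apply/andP; split; lra.
case: (lerP u 2^-1) => b.
  by rewrite reassoc_half; apply/andP; split; lra.
by rewrite reassoc_last; [apply/andP; split|]; lra.
Qed.

Lemma homotopic_concatA f g h :
  based_map X x0 f -> based_map X x0 g -> based_map X x0 h ->
  homotopic X x0 (concat f (concat g h)) (concat (concat f g) h).
Proof.
move=> bf bg bh.
apply: (@homotopic_reparam _ _ _ _ _ (fun u s => (1 - s) * u + s * reassoc u)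
  (concat f (concat g h))).
- by rewrite /reassoc; continuity.
- move=> u s hu /andP[s0 s1]; have /andP[p0 p1] := reassoc_itv hu.
  by move/andP: hu => [u0 u1]; apply/andP; split; nra.
- move=> s hs.
  have r0 : reassoc 0 = 0 by rewrite reassoc_quarter ?mulr0 //; apply/andP; split; lra.
  have r1 : reassoc 1 = 1 by rewrite reassoc_last; lra.
  by rewrite r0 r1; split; [left|right]; lra.
- exact: based_map_concat (based_map_concat bg bh).
- by move=> t ht /=; rewrite subr0 mul1r mul0r addr0 with_first_id.
move=> t ht /=; rewrite subrr mul0r add0r mul1r !concatE !with_first0 !with_firstK.
have /andP[t0 t1] := cube_first ht.
case: (lerP (t 0 ord0) 4^-1) => a.
  rewrite reassoc_quarter; last by apply/andP.
  have -> : (2 * t 0 ord0 <= 2^-1) = true by apply/idP; lra.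
  by have -> : (t 0 ord0 <= 2^-1) = true by apply/idP; lra.
case: (lerP (t 0 ord0) 2^-1) => b.
  rewrite reassoc_half; last by apply/andP; split; lra.
  have -> : (t 0 ord0 + 4^-1 <= 2^-1) = false by apply/negbTE; lra.
  have -> : (2 * (t 0 ord0 + 4^-1) - 1 <= 2^-1) = true by apply/idP; lra.
  have -> : (2 * t 0 ord0 <= 2^-1) = false by apply/negbTE; lra.
  by congr g; congr with_first; lra.
rewrite reassoc_last; last lra.
have -> : (2^-1 * t 0 ord0 + 2^-1 <= 2^-1) = false by apply/negbTE; lra.
have -> : (2 * (2^-1 * t 0 ord0 + 2^-1) - 1 <= 2^-1) = false by apply/negbTE; lra.
by congr h; congr with_first; lra.
Qed.

End GroupLaws.

Section Wedge.
Context {R : realType} {m : nat}.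
Local Notation W := (wpt R m).
Local Notation s0 := (s0 R m).
Implicit Types (x : 'rV[R]_m.+1) (p : W).

Definition sphere_keep (i : nat) p : W :=
  if p is Some (j, _) then (if j == i then p else None) else None.
Definition sphere_retract (i : nat) p : 'rV[R]_m.+1 :=
  if p is Some (j, x) then (if j == i then x else s0) else s0.

Lemma sphere_s0 : @sphere R m s0.
Proof.
rewrite /sphere /= big_ord_recl !mxE eqxx expr1n big1 ?addr0 // => i _.
by rewrite !mxE /= expr0n.
Qed.

Lemma inW_s0 i : inW i s0 = None.
Proof. by rewrite /inW eqxx. Qed.

Lemma collapse_inW k j x : collapse k (inW j x) = if (j <= k)%N then inW j x else None.
Proof. by rewrite /inW; case: eqP => //= _; case: ifP. Qed.

Lemma sphere_keep_inW i j x : sphere_keep i (inW j x) = if j == i then inW j x else None.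
Proof. by rewrite /inW; case: eqP => //= _; case: ifP. Qed.

Lemma sphere_retract_inW i j x : sphere_retract i (inW j x) = if j == i then x else s0.
Proof. by rewrite /inW; case: eqP => [->|] /=; case: ifP. Qed.

Lemma collapse_collapse k K : (k <= K)%N -> collapse k \o collapse K = collapse k :> (W -> W).
Proof.
move=> kK; apply: funext => -[[j x]|] //=; case: ifP => //= jK.
by rewrite ifF //; apply/negbTE; rewrite -ltnNge (leq_ltn_trans kK) // ltnNge jK.
Qed.

Lemma sphere_keep_collapse i k p : (i <= k)%N ->
  sphere_keep i (collapse k p) = sphere_keep i p.
Proof.
move=> ik; case: p => [[j x]|] //=.
by case: ifP => jk //=; case: eqP => // e; rewrite e ik in jk.
Qed.

Lemma inW_sphere_retract P i p : in_sphere_j P p ->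
  inW i (sphere_retract i p) = sphere_keep i p.
Proof.
case: p => [[j x] [_ [_ xs0]]|_] /=; last exact: inW_s0.
by case: eqP => [->|_]; rewrite ?inW_s0 // /inW (negbTE xs0).
Qed.

Lemma space_map_sphere_keep i k : space_map (Xle R m k) (Xle R m k) (sphere_keep i).
Proof.
split; first by case=> [[j x]|] //=; case: ifP.
move=> U /= hU j hj; have [ji|ji] := eqVneq j i.
  by apply: relopen_ext (hU j hj) => x; rewrite /= sphere_keep_inW ji eqxx.
apply: relopen_ext (relopen_const _ (U None)) => x.
by rewrite /= sphere_keep_inW (negbTE ji).
Qed.

Lemma space_map_sphere_retract i :
  space_map (Xle R m i) (Sspace R m) (sphere_retract i).
Proof.
split.
  case=> [[j x] [_ [hx _]]|_] /=; last exact: sphere_s0.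
  by case: ifP => // _; exact: sphere_s0.
move=> U /= hU j /andP[j0 ji].
have [e|e] := eqVneq j i.
  by apply: relopen_ext hU => x; rewrite /= sphere_retract_inW e eqxx.
apply: relopen_ext (relopen_const _ (U s0)) => x.
by rewrite /= sphere_retract_inW (negbTE e).
Qed.

Lemma space_map_inW i k : (0 < i <= k)%N -> space_map (Sspace R m) (Xle R m k) (inW i).
Proof.
move=> hi; split=> [x hx|U /= hU]; last exact: hU.
by rewrite /inW; case: eqP => //= /eqP.
Qed.

Lemma space_map_widen k K : (k <= K)%N -> space_map (Xle R m k) (Xle R m K) id.
Proof.
move=> kK; split; first by case=> [[j x]|] //= [/andP[j0 jk] hx]; rewrite j0 (leq_trans jk kK).
by move=> U /= hU j /andP[j0 jk]; apply: hU; rewrite j0 (leq_trans jk kK).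
Qed.

Lemma space_map_Xle_E k : space_map (Xle R m k) (Espace R m) id.
Proof.
split; first by case=> [[j x]|] //= [/andP[-> _] hx].
by move=> U /= [hU _] j /andP[j0 _]; exact: hU.
Qed.

Lemma based_map_none n k : based_map (Xle R m k) None (fun _ : 'rV[R]_n.+1 => None).
Proof. exact: based_map_const. Qed.

End Wedge.

Lemma exists_pow2_ge1 (R : realType) (x : R) : 0 < x -> exists M : nat, 1 <= 2 ^+ M * x.
Proof.
move=> x0; have hb : (x^-1 < (Num.Def.archi_bound x^-1)%:R)%R.
  by apply: archi_boundP; rewrite invr_ge0 ltW.
set M := Num.Def.archi_bound _ in hb; exists M.
have h2 : (M%:R : R) <= 2 ^+ M by rewrite -natrX ler_nat ltnW // ltn_expl.
have e : x^-1 * x = 1 by rewrite mulVf // gt_eqF.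
nra.
Qed.

Section WedgeSums.
Variables (R : realType) (m n : nat).
Local Notation W := (wpt R m).
Local Notation s0 := (s0 R m).
Implicit Types (t v : 'rV[R]_n.+1).

Variable alpha : nat -> 'rV[R]_n.+1 -> 'rV[R]_m.+1.

Definition wsum_from (s len : nat) : 'rV[R]_n.+1 -> W :=
  foldr (fun i acc => concat (inW i \o alpha i) acc) (fun _ => None) (iota s len).

Lemma wsumE k : wsum alpha k = wsum_from 1 k.
Proof. by []. Qed.

Lemma wsum_fromS s len :
  wsum_from s len.+1 = concat (inW s \o alpha s) (wsum_from s.+1 len).
Proof. by []. Qed.

Lemma collapse_sphere_term k i : collapse k \o (inW i \o alpha i) =
  if (i <= k)%N then inW i \o alpha i else (fun _ => None).
Proof. by apply: funext => t /=; rewrite collapse_inW; case: ifP. Qed.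

Lemma collapse_wsum_from k s len : (s + len <= k.+1)%N ->
  collapse k \o wsum_from s len = wsum_from s len.
Proof.
elim: len s => [|len IH] s hs //.
rewrite wsum_fromS comp_concat collapse_sphere_term IH; last by rewrite addSnnS.
by rewrite ifT //; move: hs; rewrite addnS ltnS => /(leq_trans _); apply; rewrite leq_addr.
Qed.

Lemma collapse_wsum_from_last k s len : (s + len = k.+1)%N ->
  collapse k \o wsum_from s len.+1 = wsum_from s len.
Proof.
elim: len s => [|len IH] s hs.
  rewrite wsum_fromS comp_concat collapse_sphere_term ifF; last by rewrite addn0 in hs; rewrite hs ltnn.
  exact: concat_const.
rewrite wsum_fromS comp_concat collapse_sphere_term IH; last by rewrite addSnnS.
by rewrite ifT // -ltnS -hs addnS ltnS leq_addr.
Qed.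

Lemma collapse_wsumS k : collapse k \o wsum alpha k.+1 = wsum alpha k.
Proof. by rewrite !wsumE collapse_wsum_from_last // add1n. Qed.

Lemma collapse_wsum k K : (k <= K)%N -> collapse k \o wsum alpha K = wsum alpha k.
Proof.
elim: K => [|K IH]; first by rewrite leqn0 => /eqP ->.
rewrite leq_eqVlt => /orP[/eqP <-|]; first by rewrite wsumE collapse_wsum_from // add1n.
by rewrite ltnS => kK; rewrite -(collapse_collapse kK) -compA collapse_wsumS IH.
Qed.

Lemma sphere_keep_term i j : sphere_keep i \o (inW j \o alpha j) =
  if j == i then inW j \o alpha j else (fun _ => None).
Proof. by apply: funext => t /=; rewrite sphere_keep_inW; case: ifP. Qed.

Lemma sphere_keep_wsum_from_out i s len : (i < s)%N \/ (s + len <= i)%N ->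
  sphere_keep i \o wsum_from s len = (fun _ => None).
Proof.
elim: len s => [|len IH] s hi //.
rewrite wsum_fromS comp_concat sphere_keep_term ifF; last first.
  by apply/negbTE/eqP => e; subst; case: hi; rewrite ?ltnn // addnS ltnNge leq_addr.
rewrite IH ?concat_const //.
by case: hi => h; [left; exact: ltnW|right; rewrite addSnnS].
Qed.

Hypothesis alpha_based : forall i, (0 < i)%N -> based_map (Sspace R m) s0 (alpha i).

Lemma alpha_bdry i t : (0 < i)%N -> bdry t -> alpha i t = s0.
Proof. by move=> i0 ht; have [_ ->] := alpha_based i0. Qed.

Lemma alpha_sphere i t : (0 < i)%N -> cube t -> @sphere R m (alpha i t).
Proof. by move=> i0 ht; have [[h _] _] := alpha_based i0; apply: h. Qed.

Lemma based_map_sphere_term i k : (0 < i <= k)%N ->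
  based_map (Xle R m k) None (inW i \o alpha i).
Proof.
move=> hi; have i0 : (0 < i)%N by case/andP: hi.
have := based_map_comp (space_map_inW hi) (inW_s0 _) (alpha_based i0).
exact.
Qed.

Lemma based_map_wsum_from k s len : (0 < s)%N -> (s + len <= k.+1)%N ->
  based_map (Xle R m k) None (wsum_from s len).
Proof.
elim: len s => [|len IH] s s_gt0 hs; first exact: based_map_none.
rewrite wsum_fromS; apply: based_map_concat; last by apply: IH; rewrite // addSnnS.
apply: based_map_sphere_term; rewrite s_gt0 /=.
by move: hs; rewrite addnS ltnS => /(leq_trans _); apply; rewrite leq_addr.
Qed.

Lemma is_thread_wsum : is_thread (fun k => wsum alpha k).
Proof.
split => k; first exact: based_map_wsum_from.
by rewrite collapse_wsumS; apply: homotopic_refl; exact: based_map_wsum_from.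
Qed.

Lemma sphere_keep_wsum_from_in k i len s : (0 < s)%N -> (s <= i < s + len)%N ->
  (s + len <= k.+1)%N ->
  homotopic (Xle R m k) None (sphere_keep i \o wsum_from s len) (inW i \o alpha i).
Proof.
elim: len s => [|len IH] s s_gt0 hi hk; first by rewrite addn0 in hi; exfalso; lia.
rewrite wsum_fromS comp_concat sphere_keep_term.
case: eqP => [e|ne].
  subst s; rewrite sphere_keep_wsum_from_out; last by left.
  by apply: homotopic_concat_constr; apply: based_map_sphere_term; lia.
apply: homotopic_trans (homotopic_concat_constl _) _.
  have bw : based_map (Xle R m k) None (wsum_from s.+1 len).
    by apply: based_map_wsum_from; lia.
  by have := based_map_comp (space_map_sphere_keep i k) erefl bw; exact.
by apply: IH => //; lia.
Qed.

Lemma wsum_from_null k len s : (0 < s)%N -> (s + len <= k.+1)%N ->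
  (forall i, (s <= i < s + len)%N ->
     homotopic (Xle R m k) None (inW i \o alpha i) (fun _ => None)) ->
  homotopic (Xle R m k) None (wsum_from s len) (fun _ => None).
Proof.
elim: len s => [|len IH] s s_gt0 hk h; first by apply: homotopic_refl; exact: based_map_none.
rewrite wsum_fromS -concat_const; apply: homotopic_concat; first by apply: h; lia.
by apply: IH => // [|i hi]; [lia|apply: h; lia].
Qed.

(* The infinite concatenation alpha_1 . (alpha_2 . (alpha_3 . ...)): once
   2^M (1 - t_1) >= 1, at most M factors are visited, so the finite sums
   stabilise. *)
Lemma wsum_from_stable M s len len' v : (0 < s)%N -> cube v ->
  1 <= 2 ^+ M * (1 - v 0 ord0) -> (M <= len <= len')%N ->
  wsum_from s len v = wsum_from s len' v.
Proof.
elim: M s len len' v => [|M IH] s len len' v s_gt0 hv hM /andP[h1 h2].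
  rewrite expr0 mul1r in hM; have /andP[a b] := hv ord0.
  have e : v 0 ord0 = 0 by lra.
  case: len h1 h2 => [|l] _ h2; case: len' h2 => [|l'] h2 //.
    rewrite wsum_fromS concatE e; have -> : (0 : R) <= 2^-1 by lra.
    by rewrite /= mulr0 alpha_bdry ?inW_s0 //; apply: bdry_with_first01 => //; left.
  by rewrite !wsum_fromS !concatE; have -> : v 0 ord0 <= 2^-1 by lra.
case: len h1 h2 => [|l] // h1 h2; case: len' h2 => [|l'] // h2.
rewrite !wsum_fromS !concatE; case: ifPn => h //.
have h' : 2^-1 <= v 0 ord0 by rewrite ltW // ltNge.
apply: IH => //; first exact: cube_right_half.
  by rewrite with_first0; rewrite exprS in hM; nra.
lia.
Qed.

Lemma wsum_from_first1 len s v : cube v -> v 0 ord0 = 1 -> wsum_from s len v = None.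
Proof.
elim: len s v => [|len IH] s v hv e //.
rewrite wsum_fromS concatE e ifF; last by apply/negbTE; lra.
apply: IH; first by apply: cube_with_first => //; apply/andP; split; lra.
by rewrite with_first0; lra.
Qed.

Lemma wsum_from_shape len s v : (0 < s)%N -> cube v ->
  wsum_from s len v = None \/
  exists j y, (s <= j)%N /\ @sphere R m y /\ wsum_from s len v = inW j y.
Proof.
elim: len s v => [|len IH] s v s_gt0 hv; first by left.
rewrite wsum_fromS concatE; case: ifPn => h.
  right; exists s, (alpha s (with_first (2 * v 0 ord0) v)); do 2!split => //.
  by apply: alpha_sphere => //; apply: cube_left_half.
have h' : 2^-1 <= v 0 ord0 by rewrite ltW // ltNge.
case: (IH s.+1 (with_first (2 * v 0 ord0 - 1) v)) => //; first exact: cube_right_half.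
  by left.
by move=> [j [y [hj hy]]]; right; exists j, y; split => //; exact: ltnW.
Qed.

Lemma wsum_from_tail M s len v : (0 < s)%N -> cube v ->
  2 ^+ M * (1 - v 0 ord0) < 1 ->
  wsum_from s len v = None \/
  exists j y, (s + M <= j)%N /\ @sphere R m y /\ wsum_from s len v = inW j y.
Proof.
elim: M s len v => [|M IH] s len v s_gt0 hv hM; first by rewrite addn0; apply: wsum_from_shape.
case: len => [|l]; first by left.
have P1 : 1 <= (2 : R) ^+ M by apply: exprn_ege1; lra.
have /andP[a b] := hv ord0; rewrite exprS in hM.
have h' : 2^-1 < v 0 ord0 by nra.
rewrite wsum_fromS concatE ifF; last by apply/negbTE; lra.
case: (IH s.+1 l (with_first (2 * v 0 ord0 - 1) v)) => //.
- by apply: cube_right_half => //; lra.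
- by rewrite with_first0; nra.
- by left.
by move=> [j [y [hj hy]]]; right; exists j, y; rewrite addnS -addSn.
Qed.

Definition stable_length v : nat :=
  if pselect (exists M : nat, 1 <= 2 ^+ M * (1 - v 0 ord0)) is left e
  then xchoose e else 0%N.

Lemma stable_lengthP v : v 0 ord0 < 1 -> 1 <= 2 ^+ (stable_length v) * (1 - v 0 ord0).
Proof.
move=> h; rewrite /stable_length; case: pselect => [e|ne]; first exact: (xchooseP e).
by exfalso; apply: ne; apply: exists_pow2_ge1; lra.
Qed.

Definition wsum_inf v : W := wsum alpha (stable_length v) v.

Lemma wsum_infE v K : cube v -> (stable_length v <= K)%N -> wsum_inf v = wsum alpha K v.
Proof.
move=> hv hK; rewrite /wsum_inf !wsumE; have /andP[a b] := hv ord0.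
have [lt1|ge1] := ltrP (v 0 ord0) 1.
  by apply: (@wsum_from_stable (stable_length v)) => //; [exact: stable_lengthP|rewrite leqnn].
by rewrite !wsum_from_first1 //; lra.
Qed.

Lemma collapse_wsum_inf k v : cube v -> collapse k (wsum_inf v) = wsum alpha k v.
Proof.
move=> hv; rewrite (@wsum_infE _ (maxn k (stable_length v))) ?leq_maxr //.
by rewrite -(collapse_wsum (leq_maxl k (stable_length v))).
Qed.

Lemma continuous_pow2_dist1 M : continuous (fun v : 'rV[R]_n.+1 => 2 ^+ M * (1 - v 0 ord0)).
Proof.
apply: continuous_mulR; first exact: continuous_cstR.
apply: continuous_addR; first exact: continuous_cstR.
by apply: continuous_oppR; exact: continuous_first.
Qed.

Lemma open_pow2_dist1_gt M : open [set v : 'rV[R]_n.+1 | 1 < 2 ^+ M * (1 - v 0 ord0)].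
Proof. by have := (continuousP _).1 (@continuous_pow2_dist1 M) _ (@open_gt R 1); apply. Qed.

Lemma open_pow2_dist1_lt M : open [set v : 'rV[R]_n.+1 | 2 ^+ M * (1 - v 0 ord0) < 1].
Proof. by have := (continuousP _).1 (@continuous_pow2_dist1 M) _ (@open_lt R 1); apply. Qed.

Lemma wsum_inf_nbhs_lt1 U x : isopen (Espace R m) U -> cube x -> x 0 ord0 < 1 ->
  U (wsum_inf x) ->
  exists V, open V /\ V x /\ (forall y, V y -> cube y -> U (wsum_inf y)).
Proof.
move=> oU hx lt1 hU; set M := (stable_length x).+1.
have hM : 1 < 2 ^+ M * (1 - x 0 ord0).
  by have := stable_lengthP lt1; rewrite /M exprS; have /andP[] := hx ord0; lra.
have [cw _] := @based_map_wsum_from M 1 M isT (leqnn _).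
have hU' : U (wsum alpha M x) by rewrite -(wsum_infE hx) // /M.
have [V [oV [Vx hV]]] :=
  relopen_nbhs ((cont_on_space_map (space_map_Xle_E M) cw).2 U oU) hx hU'.
exists (V `&` [set v | 1 < 2 ^+ M * (1 - v 0 ord0)]); split.
  by apply: openI => //; exact: open_pow2_dist1_gt.
split => // y [yV yM] hy; rewrite (@wsum_infE _ (maxn M (stable_length y))) ?leq_maxr //.
rewrite wsumE -(@wsum_from_stable M 1 M) ?leq_maxl ?leqnn //; last exact: ltW.
exact: hV.
Qed.

(* Near the face t_1 = 1, [wsum_inf] only visits spheres of large index,
   which lie in any neighbourhood of the wedge point. *)
Lemma wsum_inf_nbhs_first1 U x : isopen (Espace R m) U -> cube x -> x 0 ord0 = 1 ->
  U (wsum_inf x) ->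
  exists V, open V /\ V x /\ (forall y, V y -> cube y -> U (wsum_inf y)).
Proof.
move=> [_ oU_tail] hx e; rewrite /wsum_inf wsumE wsum_from_first1 // => hN.
have [N0 hN0] := oU_tail hN.
exists [set v : 'rV[R]_n.+1 | 2 ^+ N0 * (1 - v 0 ord0) < 1]; split.
  exact: open_pow2_dist1_lt.
split; first by rewrite /= e subrr mulr0 ltr01.
move=> y hy cy; rewrite /wsum_inf wsumE.
case: (@wsum_from_tail N0 1 (stable_length y) y isT cy hy) => [->|[j [z [hj [hz ->]]]]] //.
by apply: hN0 => //; apply: leq_trans hj; rewrite ?leq_addl ?add1n.
Qed.

Lemma based_map_wsum_inf : based_map (Espace R m) None wsum_inf.
Proof.
have wsum_inf_bdry t : bdry t -> wsum_inf t = None.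
  by move=> ht; rewrite /wsum_inf wsumE; apply: (@based_map_wsum_from _ 1 _ isT (leqnn _)).2.
split=> //; split.
  move=> t ht; have [[c _] _] := @based_map_wsum_from (stable_length t) 1 _ isT (leqnn _).
  by apply: (space_map_Xle_E _).1; apply: c.
move=> U oU; apply: relopen_locally => x hx hU; have /andP[_ x1] := hx ord0.
have [lt1|ge1] := ltrP (x 0 ord0) 1; first exact: wsum_inf_nbhs_lt1.
by apply: wsum_inf_nbhs_first1 => //; lra.
Qed.

End WedgeSums.

Section CechGroup.
Variables (R : realType) (m n : nat).
Local Notation thread := (thread R m n.+1).
Implicit Types (F G : thread).

Lemma in_imPsi_W1 F : in_W1 F -> in_imPsi F.
Proof.
case=> thF [alpha [alpha_based hF]]; split => //.
exists (wsum_inf alpha); split; first exact: based_map_wsum_inf.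
move=> k; apply: (homotopic_eq _ _ (hF k)) => // t ht.
by rewrite /= collapse_wsum_inf.
Qed.

Lemma is_thread_add F G : is_thread F -> is_thread G -> is_thread (cech_add F G).
Proof.
case=> bF tF [bG tG]; split => k; first exact: based_map_concat.
by rewrite /cech_add comp_concat; exact: homotopic_concat (tF k) (tG k).
Qed.

Lemma is_thread_opp F : is_thread F -> is_thread (cech_opp F).
Proof.
case=> bF tF; split => k; first exact: based_map_rev.
by rewrite /cech_opp comp_rev; exact: homotopic_rev (tF k).
Qed.

Lemma in_imPsi0 : in_imPsi (@cech_zero R m n.+1).
Proof.
split; first by split => k; [|apply: homotopic_refl]; exact: based_map_none.
exists (fun _ => None); split; first exact: based_map_const.
by move=> k; apply: homotopic_refl; exact: based_map_none.
Qed.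

Lemma in_imPsiD F G : in_imPsi F -> in_imPsi G -> in_imPsi (cech_add F G).
Proof.
case=> tF [f [bf hf]] [tG [g [bg hg]]]; split; first exact: is_thread_add.
exists (concat f g); split; first exact: based_map_concat.
by move=> k; rewrite /cech_add comp_concat; exact: homotopic_concat (hf k) (hg k).
Qed.

Lemma in_imPsiN F : in_imPsi F -> in_imPsi (cech_opp F).
Proof.
case=> tF [f [bf hf]]; split; first exact: is_thread_opp.
exists (Defs.rev f); split; first exact: based_map_rev.
by move=> k; rewrite /cech_opp comp_rev; exact: homotopic_rev (hf k).
Qed.

Lemma in_imPsi_eq F G : in_imPsi F -> is_thread G -> cech_eq F G -> in_imPsi G.
Proof.
case=> tF [f [bf hf]] tG e; split => //; exists f; split => // k.
exact: homotopic_trans (homotopic_sym (e k)) (hf k).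
Qed.

(* The complement of W_1 in im(Psi_n): elements whose image under every
   retraction onto a single sphere is trivial. *)
Definition sphere_null F : Prop := in_imPsi F /\
  forall k i, (0 < i <= k)%N ->
    homotopic (Xle R m k) None (sphere_keep i \o F k) (fun _ => None).

Lemma sphere_null_eq F G : sphere_null F -> is_thread G -> cech_eq F G -> sphere_null G.
Proof.
case=> iF hF tG e; split; first exact: in_imPsi_eq iF tG e.
move=> k i hik; apply: homotopic_trans _ (hF k i hik).
have := homotopic_comp (space_map_sphere_keep i k) erefl (e k).
by move=> h; exact: (homotopic_sym h).
Qed.

Lemma sphere_null0 : sphere_null (@cech_zero R m n.+1).
Proof.
split; first exact: in_imPsi0.
by move=> k i _; apply: homotopic_refl; exact: based_map_none.
Qed.

Lemma sphere_nullD F G : sphere_null F -> sphere_null G -> sphere_null (cech_add F G).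
Proof.
case=> iF hF [iG hG]; split; first exact: in_imPsiD.
move=> k i hik; rewrite /cech_add comp_concat -concat_const.
exact: homotopic_concat (hF k i hik) (hG k i hik).
Qed.

Lemma sphere_nullN F : sphere_null F -> sphere_null (cech_opp F).
Proof.
case=> iF hF; split; first exact: in_imPsiN.
by move=> k i hik; rewrite /cech_opp comp_rev; exact: homotopic_rev (hF k i hik).
Qed.

Lemma thread_sphere_keep F i k : is_thread F -> (0 < i <= k)%N ->
  homotopic (Xle R m k) None (sphere_keep i \o F i) (sphere_keep i \o F k).
Proof.
case=> bF tF; elim: k => [|k IH] hik; first by exfalso; lia.
have [->|ne] := eqVneq i k.+1.
  apply: homotopic_refl.
  by have := based_map_comp (space_map_sphere_keep k.+1 k.+1) erefl (bF _); exact.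
have ik : (i <= k)%N by lia.
have hik' : (0 < i <= k)%N by lia.
apply: homotopic_trans.
  by have := homotopic_comp (space_map_widen (leqnSn k)) erefl (IH hik'); exact.
have := homotopic_comp
  (space_map_comp (space_map_sphere_keep i k) (space_map_widen (leqnSn k))) erefl (tF k).
move=> h; apply: (homotopic_eq _ _ (homotopic_sym h)) => t _ //=.
by rewrite sphere_keep_collapse.
Qed.

Lemma W1_sphere_null_eq0 F : in_W1 F -> sphere_null F -> cech_eq F (@cech_zero R m n.+1).
Proof.
case=> tF [alpha [alpha_based hF]] [_ hC] k.
apply: homotopic_trans (hF k) _; rewrite wsumE.
apply: (@wsum_from_null _ _ _ _ k k 1 isT (leqnn _)) => i hi.
have hik : (0 < i <= k)%N by lia.
apply: homotopic_trans _ (hC k i hik).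
have hw := sphere_keep_wsum_from_in alpha_based (k := k) (s := 1) isT hi (leqnn k.+1).
apply: homotopic_trans (homotopic_sym hw) _.
have := homotopic_comp (space_map_sphere_keep i k) erefl (hF k).
by move=> h; exact: (homotopic_sym h).
Qed.

Definition W1_part F : thread := wsum (fun i => sphere_retract i \o F i).

Lemma W1_part_based F : is_thread F -> forall i, (0 < i)%N ->
  based_map (Sspace R m) (s0 R m) (sphere_retract i \o F i).
Proof.
by case=> bF _ i _; have := based_map_comp (space_map_sphere_retract i) erefl (bF i); exact.
Qed.

Lemma in_W1_part F : is_thread F -> in_W1 (W1_part F).
Proof.
move=> tF; have tW := is_thread_wsum (W1_part_based tF).
split=> //; exists (fun i => sphere_retract i \o F i); split; first exact: W1_part_based.
by move=> k; apply: homotopic_refl; exact: tW.1.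
Qed.

Lemma sphere_keep_W1_part F k i : is_thread F -> (0 < i <= k)%N ->
  homotopic (Xle R m k) None (sphere_keep i \o W1_part F k) (sphere_keep i \o F k).
Proof.
move=> tF hik; have [bF _] := tF; have hT := thread_sphere_keep tF hik.
apply: (homotopic_trans _ hT); rewrite /W1_part wsumE.
have hi : (1 <= i < 1 + k)%N by lia.
have hw := sphere_keep_wsum_from_in (W1_part_based tF) (k := k) (s := 1) isT hi (leqnn k.+1).
apply: homotopic_trans hw _.
apply: (homotopic_eq _ _ (homotopic_refl (homotopic_based hT))) => t ht //=.
by have [[c _] _] := bF i; rewrite (inW_sphere_retract _ (c t ht)).
Qed.

Lemma in_imPsi_decomp F : in_imPsi F ->
  exists W D, in_W1 W /\ sphere_null D /\ cech_eq F (cech_add W D).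
Proof.
move=> iF; have tF := iF.1; have [bF _] := tF.
have W1W := in_W1_part tF; have bW k := W1W.1.1 k.
exists (W1_part F), (cech_add (cech_opp (W1_part F)) F); split => //; split.
  split; first exact: in_imPsiD (in_imPsiN (in_imPsi_W1 W1W)) iF.
  move=> k i hik; rewrite /cech_add /cech_opp comp_concat comp_rev.
  have bqF : based_map (Xle R m k) None (sphere_keep i \o F k).
    by have := based_map_comp (space_map_sphere_keep i k) erefl (bF k); exact.
  apply: homotopic_trans _ (homotopic_concat_revl bqF).
  apply: homotopic_concat; last exact: homotopic_refl.
  by apply: homotopic_rev; exact: sphere_keep_W1_part.
move=> k; apply: homotopic_sym; rewrite /cech_add /cech_opp.
apply: homotopic_trans (homotopic_concatA (bW k) (based_map_rev (bW k)) (bF k)) _.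
apply: homotopic_trans _ (homotopic_concat_constl (bF k)).
by apply: homotopic_concat; [exact: homotopic_concat_revr|exact: homotopic_refl].
Qed.

End CechGroup.

Theorem mainTheorem10 (R : realType) (m n : nat) (hm : (2 <= m)%N) (hn : (2 <= n)%N) :
  (forall F : thread R m n, in_W1 F -> in_imPsi F) /\
  direct_summand_in (@in_W1 R m n) (@in_imPsi R m n).
Proof.
case: n hn => [//|n] _.
split; first exact: in_imPsi_W1.
exists (@sphere_null R m n); split; first exact: sphere_null_eq.
split; first exact: sphere_null0.
split; first exact: sphere_nullD.
split; first exact: sphere_nullN.
split; first by move=> F [].
split; first exact: in_imPsi_decomp.
exact: W1_sphere_null_eq0.
Qed.
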